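(* Let $p$ be a graph parameter such that $p(G\uplus H)=\max(p(G),p(H))$ for all graphs $G,H$ (where $\uplus$ is disjoint union). Let $\mathcal{A}$ be a class of structures of bounded arity $r$ such that the class of Gaifman graphs of structures in $\mathcal{A}$ is fractionally-$p$-fragile. Then $\mathcal{A}$ is $p$-pliable.
   Context: A $\sigma$-structure $\mathbb{A}$ is a finite domain $A$ with functions $f^{\mathbb{A}}\colon A^{\mathrm{ar}(f)}\to\mathbb{Q}_{\ge0}$, $f\in\sigma$; bounded arity $r$ means $\mathrm{ar}(f)\le r$ for all symbols. $\mathrm{opt}(\mathbb{A},\mathbb{B})=\max_{h\colon A\to B}\sum_{f}\sum_{\bar x}f^{\mathbb{A}}(\bar x)f^{\mathbb{B}}(h(\bar x))$ over all maps; $d_{\mathrm{opt}}(\mathbb{A},\mathbb{B})=\sup_{\mathbb{C}}|\ln\mathrm{opt}(\mathbb{A},\mathbb{C})-\ln\mathrm{opt}(\mathbb{B},\mathbb{C})|$ over $\sigma$-structures $\mathbb{C}$ ($\ln0=-\infty$, $|\ln0-\ln0|=0$). The Gaifman graph of $\mathbb{A}$ has vertex set $A$, with distinct $u,v$ adjacent iff they occur together in a tuple $\bar x$ with $f^{\mathbb{A}}(\bar x)>0$; $p(\mathbb{A})$ is $p$ of the Gaifman graph. $\mathcal{A}$ is $p$-pliable if for every $\varepsilon>0$ there is $k$ such that every $\mathbb{A}\in\mathcal{A}$ (signature $\sigma$) has a $\sigma$-structure $\mathbb{B}$ with $p(\mathbb{B})\le k$ and $d_{\mathrm{opt}}(\mathbb{A},\mathbb{B})\le\varepsilon$.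 A class of graphs $\mathcal{G}$ is fractionally-$p$-fragile if for every $\varepsilon>0$ there is $k$ such that every $G\in\mathcal{G}$ has a probability distribution $\pi$ over sets $X\subseteq V(G)$ with $p(G-X)\le k$ such that $\Pr_{X\sim\pi}[v\in X]\le\varepsilon$ for every $v\in V(G)$. *)

From HB Require Import structures.
From mathcomp Require Import all_boot all_order all_algebra.
From mathcomp Require Import all_classical all_reals all_analysis.
Set Implicit Arguments. Unset Strict Implicit. Unset Printing Implicit Defensive.
Import Order.TTheory GRing.Theory Num.Theory.
Local Open Scope ring_scope.

Record graph := Graph {
  gV : finType;
  gE : rel gV;
  gE_sym : symmetric gE;
  gE_irr : irreflexive gE }.

Definition graph_iso (G H : graph) : Prop :=
  exists f : gV G -> gV H, bijective f /\ forall x y, gE (f x) (f y) = gE x y.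

Definition graph_parameter (p : graph -> nat) : Prop :=
  forall G H, graph_iso G H -> p G = p H.

Definition sum_rel (G H : graph) : rel (gV G + gV H) :=
  fun x y => match x, y with
             | inl a, inl b => gE a b
             | inr a, inr b => gE a b
             | _, _ => false end.

Lemma sum_rel_sym G H : symmetric (@sum_rel G H).
Proof. by case=> a [] b //=; apply: gE_sym. Qed.

Lemma sum_rel_irr G H : irreflexive (@sum_rel G H).
Proof. by case=> a /=; apply: gE_irr. Qed.

Definition disj_union (G H : graph) : graph :=
  Graph (@sum_rel_sym G H) (@sum_rel_irr G H).

Definition del_rel (G : graph) (X : {set gV G}) : rel {x : gV G | x \notin X} :=
  fun x y => gE (val x) (val y).

Lemma del_rel_sym G X : symmetric (@del_rel G X).
Proof. by move=> x y; rewrite /del_rel gE_sym. Qed.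

Lemma del_rel_irr G X : irreflexive (@del_rel G X).
Proof. by move=> x; rewrite /del_rel gE_irr. Qed.

Definition del_graph (G : graph) (X : {set gV G}) : graph :=
  Graph (@del_rel_sym G X) (@del_rel_irr G X).

Record signature := Signature { ssym : finType; sar : ssym -> nat }.

Record structure (s : signature) := Struct {
  sdom : finType;
  sfun : forall f : ssym s, (sar f).-tuple sdom -> rat;
  sfun_ge0 : forall (f : ssym s) (x : (sar f).-tuple sdom), 0 <= sfun x }.

(* opt(A,B) = max over all maps h : A -> B (max over the empty set is 0) *)
Definition opt (s : signature) (A B : structure s) : rat :=
  \big[Num.max/0]_(h : {ffun sdom A -> sdom B})
     \sum_(f : ssym s) \sum_(x : (sar f).-tuple (sdom A))
        sfun x * sfun (map_tuple h x).

(* |ln a - ln b| with conventions ln 0 = -oo and |ln 0 - ln 0| = 0 *)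
Definition ln_dist (R : realType) (a b : rat) : \bar R :=
  if (a == 0) && (b == 0) then 0%E
  else if (a == 0) || (b == 0) then +oo%E
  else (`| ln (ratr a : R) - ln (ratr b) |)%:E.

Definition d_opt (R : realType) (s : signature) (A B : structure s) : \bar R :=
  ereal_sup [set x : \bar R | exists C : structure s, x = ln_dist R (opt A C) (opt B C)].

Definition gaif_rel (s : signature) (A : structure s) : rel (sdom A) :=
  fun u v => (u != v) &&
    [exists f : ssym s, [exists x : (sar f).-tuple (sdom A),
        (0 < sfun x) && (u \in x) && (v \in x)]].

Lemma gaif_rel_sym s (A : structure s) : symmetric (@gaif_rel s A).
Proof.
move=> u v; rewrite /gaif_rel eq_sym; congr (_ && _).
apply/existsP/existsP=> [][f /existsP [x Hx]]; exists f; apply/existsP; exists x;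
  by move: Hx; case: (0 < _) (u \in x) (v \in x) => [] [] [].
Qed.

Lemma gaif_rel_irr s (A : structure s) : irreflexive (@gaif_rel s A).
Proof. by move=> u; rewrite /gaif_rel eqxx. Qed.

Definition gaifman (s : signature) (A : structure s) : graph :=
  Graph (@gaif_rel_sym s A) (@gaif_rel_irr s A).

Definition struct_class := forall s : signature, structure s -> Prop.

Definition frac_fragile (R : realType) (p : graph -> nat) (GG : graph -> Prop) : Prop :=
  forall eps : R, 0 < eps -> exists k : nat, forall G : graph, GG G ->
    exists pi : {ffun {set gV G} -> R},
      [/\ forall X, 0 <= pi X,
          \sum_(X : {set gV G}) pi X = 1,
          forall X, 0 < pi X -> (p (del_graph X) <= k)%N &
          forall v : gV G, \sum_(X : {set gV G} | v \in X) pi X <= eps].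

Definition gaifman_class (AA : struct_class) (G : graph) : Prop :=
  exists s (A : structure s), AA s A /\ G = gaifman A.

Definition pliable (R : realType) (p : graph -> nat) (AA : struct_class) : Prop :=
  forall eps : R, 0 < eps -> exists k : nat, forall s (A : structure s), AA s A ->
    exists B : structure s, (p (gaifman B) <= k)%N /\ (d_opt R A B <= eps%:E)%E.

From Pilot Require Import Defs.
From HB Require Import structures.
From mathcomp Require Import all_boot all_order all_algebra.
From mathcomp Require Import all_classical all_reals all_analysis.
From mathcomp Require Import ring lra.
(* Re-imported so that the field [sfun] of [Defs] shadows MathComp-Analysis' [sfun]. *)
Import Pilot.Defs.
Import Order.TTheory GRing.Theory Num.Theory.
Local Open Scope ring_scope.
Set Implicit Arguments. Unset Strict Implicit. Unset Printing Implicit Defensive.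

(* Let pi be the distribution over deletion sets X given by fractional fragility of the
   Gaifman graph G of A, approximated by a rational distribution q.  The structure B is
   the disjoint union, over the X with q(X) > 0, of copies of A - X weighted by q(X).  A
   tuple meeting X is not dropped but redirected inside A - X (its vertices in X are
   replaced by one of its vertices outside X) with a small weight d, so that the Gaifman
   graph of the copy of X is exactly G - X: since p is invariant and takes maxima over
   disjoint unions, p(B) <= k.  For every C, composing a map B -> C with the copies gives
   opt(B, C) <= (1 + d N) opt(A, C), N the number of tuples of A; conversely copying an
   optimal map A -> C into every copy gives opt(B, C) >= (1 - r m) opt(A, C), because a
   tuple of arity at most r avoids X with probability at least 1 - r m when every vertex
   lies in X with probability at most m.  Choosing m and d small makes d_opt(A, B) small. *)

Definition induced_subgraph (G : graph) (S : {set gV G}) : graph := del_graph (~: S).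

Lemma notin_setC (T : finType) (S : {set T}) (x : T) : (x \notin ~: S) = (x \in S).
Proof. by rewrite inE negbK. Qed.

Lemma graph_iso_inj (G H : graph) (f : gV G -> gV H) :
  injective f -> (forall y, exists x, f x = y) ->
  (forall x y, gE (f x) (f y) = gE x y) -> graph_iso G H.
Proof.
move=> f_inj f_surj f_edge; exists f; split=> //.
apply: inj_card_bij f_inj _; have [g fgK] := fin_all_exists f_surj.
exact: leq_card (can_inj fgK).
Qed.

Lemma graph_iso_induced_subgraph (H G : graph) (S : {set gV G}) (f : gV H -> gV G) :
  injective f -> (forall y, f y \in S) -> (forall x, x \in S -> exists y, f y = x) ->
  (forall y z, gE (f y) (f z) = gE y z) -> graph_iso H (induced_subgraph S).
Proof.
move=> f_inj f_in f_onto f_edge.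
have fS y : f y \notin ~: S by rewrite notin_setC.
apply: (@graph_iso_inj _ _ (fun y => Sub (f y) (fS y) : gV (induced_subgraph S))) => //.
- by move=> y z /(congr1 val) /f_inj.
- move=> x; have [y fy] := f_onto _ (etrans (esym (notin_setC _ _)) (valP x)).
  by exists y; apply: val_inj.
Qed.

Lemma induced_subgraph_setT_iso (G : graph) : graph_iso G (induced_subgraph [set: gV G]).
Proof. by apply: (@graph_iso_induced_subgraph _ _ _ id) => // x; exists x. Qed.

Lemma induced_subgraph_split_iso (G : graph) (S Y : {set gV G}) :
  (forall x y, x \in Y -> y \notin Y -> gE x y = false) ->
  graph_iso (disj_union (induced_subgraph (S :&: Y)) (induced_subgraph (S :\: Y)))
            (induced_subgraph S).
Proof.
move=> no_cross; set GY := induced_subgraph (S :&: Y); set GN := induced_subgraph (S :\: Y).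
have memY (a : gV GY) : val a \in S :&: Y by rewrite -notin_setC (valP a).
have memN (b : gV GN) : val b \in S :\: Y by rewrite -notin_setC (valP b).
pose f (z : gV (disj_union GY GN)) : gV G := match z with inl a => val a | inr b => val b end.
apply: (@graph_iso_induced_subgraph _ _ _ f).
- have cross (a : gV GY) (b : gV GN) : val a <> val b.
    by move=> eq_ab; have := memN b; rewrite -eq_ab inE (setIP (memY a)).2.
  case=> [a|b] [a'|b'] /= eq_ab; first by congr inl; apply: val_inj.
  + by case: (cross a b').
  + by case: (cross a' b).
  + by congr inr; apply: val_inj.
- by case=> [a|b]; [have /setIP[] := memY a | have /setDP[] := memN b].
- move=> x xS; have [xY|xY] := boolP (x \in Y).
  + have xSY : x \notin ~: (S :&: Y) by rewrite notin_setC inE xS.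
    by exists (inl (Sub x xSY)).
  + have xSY : x \notin ~: (S :\: Y) by rewrite notin_setC inE xS xY.
    by exists (inr (Sub x xSY)).
- case=> [a|b] [a'|b'] //=.
  + by rewrite no_cross //; [case/setIP: (memY a) | case/setDP: (memN b')].
  + by rewrite gE_sym no_cross //; [case/setIP: (memY a') | case/setDP: (memN b)].
Qed.

Lemma disj_union_set0_iso (H G : graph) :
  graph_iso H (disj_union H (induced_subgraph (finset.set0 : {set gV G}))).
Proof.
apply: (@graph_iso_inj H (disj_union H _) inl) => //; first by move=> x y [].
case=> [a|b]; first by exists a.
by have := valP b; rewrite notin_setC inE.
Qed.

Section GraphParameter.

Variable p : graph -> nat.
Hypothesis p_iso : graph_parameter p.
Hypothesis p_union : forall G H, p (disj_union G H) = maxn (p G) (p H).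

Lemma param_set0_le (G H : graph) :
  (p (induced_subgraph (finset.set0 : {set gV G})) <= p H)%N.
Proof. by rewrite (p_iso (disj_union_set0_iso H G)) p_union leq_maxr. Qed.

Lemma param_le_of_classes (H : graph) (I : eqType) (c : gV H -> I) (k : nat) :
  (forall x y, gE x y -> c x = c y) ->
  (p (induced_subgraph (finset.set0 : {set gV H})) <= k)%N ->
  (forall x, p (induced_subgraph [set y | c y == c x]) <= k)%N ->
  (p H <= k)%N.
Proof.
move=> c_edge k_set0 k_class.
suff induced_le (S : {set gV H}) : (forall x y, x \in S -> c y = c x -> y \in S) ->
    (p (induced_subgraph S) <= k)%N.
  by rewrite (p_iso (induced_subgraph_setT_iso H)); apply: induced_le => x y; rewrite !inE.
move: {2}#|S|.+1 (ltnSn #|S|) => n; elim: n S => // n IH S S_lt S_closed.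
have [->|[x xS]] := set_0Vmem S; first exact: k_set0.
set Y := [set y | c y == c x].
have YS : Y \subset S by apply/fintype.subsetP => y; rewrite inE => /eqP; apply: S_closed.
have no_cross y z : y \in Y -> z \notin Y -> gE y z = false.
  by rewrite !inE => /eqP cy; apply: contraNF => /c_edge cyz; rewrite -cyz cy.
rewrite -(p_iso (induced_subgraph_split_iso S no_cross)) p_union geq_max.
rewrite (finset.setIidPr YS) k_class; apply: IH => [|y z]; last first.
  rewrite !inE => /andP [yY yS] czy; rewrite (S_closed y) // andbT.
  by apply: contra yY => /eqP czx; rewrite -czy czx.
rewrite -ltnS (leq_trans _ S_lt) // ltnS -(cardsID Y S) -add1n leq_add2r card_gt0.
by apply/set0Pn; exists x; rewrite !inE xS eqxx.
Qed.

End GraphParameter.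

Section NonnegSums.
Variables (R : numDomainType) (I : finType).

Lemma psumr_gt0P (P : pred I) (F : I -> R) :
  (forall i, P i -> 0 <= F i) ->
  reflect (exists i, P i && (0 < F i)) (0 < \sum_(i | P i) F i).
Proof.
move=> F_ge0; rewrite lt0r sumr_ge0 // andbT psumr_neq0 //.
apply: (iffP hasP) => [[i _ ?]|[i ?]]; exists i => //; exact: mem_index_enum.
Qed.

Lemma sumr_ge_term (P : pred I) (F : I -> R) i :
  (forall j, P j -> 0 <= F j) -> P i -> F i <= \sum_(j | P j) F j.
Proof.
move=> F_ge0 Pi; rewrite (bigD1 i) //= lerDl sumr_ge0 // => j /andP[Pj _].
exact: F_ge0.
Qed.

Lemma sumr_le_uniq (P : pred I) (F : I -> R) (M : R) :
  (forall i j, P i -> P j -> i = j) -> (forall i, P i -> F i <= M) -> 0 <= M ->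
  \sum_(i | P i) F i <= M.
Proof.
move=> P_uniq F_le M_ge0; case: (pickP P) => [i Pi|P0]; last by rewrite big_pred0.
rewrite (big_pred1 i) ?F_le // => j; apply/idP/eqP => [Pj|->//]; exact: P_uniq.
Qed.

End NonnegSums.

Definition avoids (T : finType) (X : {set T}) (u : seq T) := all (fun y => y \notin X) u.

Section SetDistribution.
Variables (R : numDomainType) (T : finType) (q : {set T} -> R) (m : R).
Hypotheses (q_ge0 : forall X, 0 <= q X) (q_sum1 : \sum_X q X = 1).
Hypothesis q_marginal : forall v, \sum_(X : {set T} | v \in X) q X <= m.

Lemma sum_not_avoids_le (u : seq T) :
  \sum_(X : {set T} | ~~ avoids X u) q X <= (size u)%:R * m.
Proof.
elim: u => [|y u IH]; first by rewrite big_pred0 ?mul0r.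
rewrite [size _]/= -add1n natrD mulrDl mul1r; apply: le_trans (lerD (q_marginal y) IH).
rewrite big_mkcond [X in _ <= X + _]big_mkcond [X in _ <= _ + X]big_mkcond -big_split.
apply: ler_sum => X _; rewrite [avoids _ _]/= negb_and negbK.
by case: (y \in X); case: (avoids X u); rewrite /= ?addr0 ?add0r ?lerDl ?q_ge0.
Qed.

Lemma sum_avoids_ge (u : seq T) : 1 - (size u)%:R * m <= \sum_(X | avoids X u) q X.
Proof.
rewrite -{1}q_sum1 (bigID (fun X => avoids X u)) /= -addrA gerDl subr_le0.
exact: sum_not_avoids_le.
Qed.

Lemma exists_avoiding_set (v : T) : m < 1 -> exists X : {set T}, (v \notin X) && (0 < q X).
Proof.
move=> m_lt1.
suff /(psumr_gt0P (fun X _ => q_ge0 X))[X ?] : 0 < \sum_(X : {set T} | v \notin X) q X.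
  by exists X.
apply: lt_le_trans (_ : 0 < 1 - m) _; first by rewrite subr_gt0.
rewrite -{1}q_sum1 (bigID (fun X : {set T} => v \in X)) /= addrAC gerDr subr_le0.
exact: q_marginal.
Qed.

End SetDistribution.

Section OptBasics.
Variables (s : signature) (A C : structure s).

Definition hom_weight (h : sdom A -> sdom C) : rat :=
  \sum_(f : ssym s) \sum_(x : (sar f).-tuple (sdom A)) sfun x * sfun (map_tuple h x).

Lemma sfun_mul_ge0 f (x : (sar f).-tuple (sdom A)) (y : (sar f).-tuple (sdom C)) :
  0 <= sfun x * sfun y.
Proof. exact: mulr_ge0 (sfun_ge0 _) (sfun_ge0 _). Qed.

Lemma opt_ge0 : 0 <= opt A C.
Proof. exact: bigmax_ge_id. Qed.

Lemma hom_weight_le_opt (h : sdom A -> sdom C) : hom_weight h <= opt A C.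
Proof.
have -> : hom_weight h = hom_weight [ffun x => h x].
  by apply: eq_bigr => f _; apply: eq_bigr => x _; congr (_ * sfun _);
    apply: eq_from_tnth => i; rewrite !tnth_map ffunE.
exact: le_bigmax.
Qed.

Lemma opt_le (M : rat) :
  0 <= M -> (forall h : sdom A -> sdom C, hom_weight h <= M) -> opt A C <= M.
Proof. by move=> M_ge0 hM; apply: bigmax_le => // h _; apply: hM. Qed.

Lemma sfun_mul_le_opt f (x : (sar f).-tuple (sdom A)) (h : sdom A -> sdom C) :
  sfun x * sfun (map_tuple h x) <= opt A C.
Proof.
apply: le_trans (hom_weight_le_opt h).
apply: le_trans (sumr_ge_term (P := predT) _ (i := f) _) => //; last first.
  by move=> g _; apply: sumr_ge0 => y _; apply: sfun_mul_ge0.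
exact: (sumr_ge_term (P := predT) (fun y _ => sfun_mul_ge0 y _)).
Qed.

End OptBasics.

Definition ntuples s (A : structure s) : rat :=
  \sum_(f : ssym s) \sum_(x : (sar f).-tuple (sdom A)) 1.

Lemma ntuples_ge0 s (A : structure s) : 0 <= ntuples A.
Proof. by apply: sumr_ge0 => f _; apply: sumr_ge0. Qed.

Lemma ln_dist_le (R : realType) (a b : rat) (eps : R) :
  0 <= eps -> 0 <= a -> expR (- eps) * ratr a <= ratr b -> ratr b <= expR eps * ratr a ->
  (ln_dist R a b <= eps%:E)%E.
Proof.
move=> eps_ge0 a_ge0 lo hi; rewrite /ln_dist.
have [a0|a_neq0] := eqVneq a 0.
  have b0 : b = 0.
    apply/eqP; rewrite -(fmorph_eq0 (ratr : rat -> R)) eq_le.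
    by move: lo hi; rewrite a0 rmorph0 !mulr0 => -> ->.
  by rewrite a0 b0 eqxx lee_fin.
have a_gt0 : 0 < ratr a :> R by rewrite ltr0q lt0r a_neq0.
have b_gt0 : 0 < ratr b :> R by apply: lt_le_trans lo; rewrite mulr_gt0 ?expR_gt0.
have b_neq0 : b != 0 by rewrite -(fmorph_eq0 (ratr : rat -> R)) gt_eqF.
rewrite (negbTE b_neq0) /= lee_fin ler_norml.
have ln_lo : - eps + ln (ratr a) <= ln (ratr b) :> R.
  rewrite -[- eps]expRK -lnM ?posrE ?expR_gt0 // ler_ln ?posrE //.
  exact: mulr_gt0 (expR_gt0 _) a_gt0.
have ln_hi : ln (ratr b) <= eps + ln (ratr a) :> R.
  rewrite -[eps]expRK -lnM ?posrE ?expR_gt0 // ler_ln ?posrE //.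
  exact: mulr_gt0 (expR_gt0 _) a_gt0.
by apply/andP; split; lra.
Qed.

Section Copies.
Variables (s : signature) (A : structure s) (q : {ffun {set sdom A} -> rat}) (d : rat).
Hypotheses (q_ge0 : forall X, 0 <= q X) (d_gt0 : 0 < d).
Local Notation V := (sdom A).

(* The vertex (X, v) is the copy of v in the copy of A - X. *)
Definition copy_vertex := {xv : {set V} * V | (xv.2 \notin xv.1) && (0 < q xv.1)}.

(* When every vertex of [u] lies in [X], [u] is left unchanged and hence, by the
   constraint on [copy_vertex], contributes to no tuple of the copy of [A - X]. *)
Definition redirect_vertex (X : {set V}) (u : seq V) (y : V) : V :=
  if y \in X then odflt y [pick z in u | z \notin X] else y.

Definition redirect (X : {set V}) n (u : n.-tuple V) : n.-tuple V :=
  map_tuple (redirect_vertex X u) u.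

Definition redirect_weight (X : {set V}) n (u : n.-tuple V) : rat :=
  if avoids X u then 1 else d.

Definition copies_fun f (t : (sar f).-tuple copy_vertex) : rat :=
  \sum_X q X * \sum_(u : (sar f).-tuple V | map val t == map (pair X) (redirect X u))
    sfun u * redirect_weight X u.

Lemma redirect_weight_gt0 (X : {set V}) n (u : n.-tuple V) : 0 < redirect_weight X u.
Proof. by rewrite /redirect_weight; case: ifP. Qed.

Lemma copies_fun_ge0 f (t : (sar f).-tuple copy_vertex) : 0 <= copies_fun t.
Proof.
apply: sumr_ge0 => X _; rewrite mulr_ge0 // sumr_ge0 // => u _.
by rewrite mulr_ge0 ?sfun_ge0 ?ltW ?redirect_weight_gt0.
Qed.

Definition copies : structure s := Struct copies_fun_ge0.

Lemma redirect_id (X : {set V}) n (u : n.-tuple V) : avoids X u -> redirect X u = u.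
Proof.
move=> /allP u_avoids; apply: eq_from_tnth => i; rewrite tnth_map /redirect_vertex.
by rewrite (negbTE (u_avoids _ (mem_tnth i u))).
Qed.

Lemma mem_redirect (X : {set V}) n (u : n.-tuple V) y : y \in redirect X u -> y \in u.
Proof.
case/mapP => z zu ->; rewrite /redirect_vertex; case: ifP => // _.
by case: pickP => //= w /andP[].
Qed.

Lemma redirect_keep (X : {set V}) n (u : n.-tuple V) y :
  y \in u -> y \notin X -> y \in redirect X u.
Proof. by move=> yu yX; apply/mapP; exists y; rewrite // /redirect_vertex (negbTE yX). Qed.

Lemma avoids_redirect (X : {set V}) n (u : n.-tuple V) y :
  y \in u -> y \notin X -> avoids X (redirect X u).
Proof.
move=> yu yX; apply/allP => _ /mapP[z zu ->]; rewrite /redirect_vertex.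
case: ifP => [_|/negbT //].
by case: pickP => [w /andP[]|/(_ y)] //=; rewrite yu yX.
Qed.

Lemma copy_tuple_exists (X : {set V}) n (w : n.-tuple V) :
  0 < q X -> avoids X w -> exists t : n.-tuple copy_vertex, map val t = map (pair X) w.
Proof.
move=> qX w_avoids; pose l : seq copy_vertex := pmap insub (map (pair X) w).
have l_val : map val l = map (pair X) w.
  rewrite (pmap_filter (@insubK _ _ copy_vertex)); apply/all_filterP.
  by rewrite all_map; apply/allP => y /(allP w_avoids) yX; rewrite /= insubT //= yX qX.
have /eqP l_size : size l == n by rewrite -(size_map val) l_val size_map size_tuple.
by exists (Tuple (introT eqP l_size)).
Qed.

Lemma copies_fun_gt0P f (t : (sar f).-tuple copy_vertex) :
  reflect (exists X (u : (sar f).-tuple V),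
             [/\ 0 < q X, 0 < sfun u & map val t = map (pair X) (redirect X u)])
          (0 < copies_fun t).
Proof.
have term_ge0 X (u : (sar f).-tuple V) : 0 <= sfun u * redirect_weight X u.
  by rewrite mulr_ge0 ?sfun_ge0 ?ltW ?redirect_weight_gt0.
have qterm_ge0 (X : {set V}) : 0 <= q X * \sum_(u : (sar f).-tuple V |
    map val t == map (pair X) (redirect X u)) sfun u * redirect_weight X u.
  by rewrite mulr_ge0 ?sumr_ge0.
apply: (iffP (psumr_gt0P (fun X _ => qterm_ge0 X))) => [[X]|[X [u [qX uA tE]]]].
- rewrite /= mulr_ge0_gt0 ?sumr_ge0 // => /andP[qX].
  case/psumr_gt0P => [u _|u /andP[/eqP tE]]; first exact: term_ge0.
  by rewrite pmulr_lgt0 ?redirect_weight_gt0 // => uA; exists X, u.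
- exists X; rewrite /= mulr_gt0 //; apply/psumr_gt0P => [v _|]; first exact: term_ge0.
  by exists u; rewrite tE eqxx mulr_gt0 ?redirect_weight_gt0.
Qed.

Lemma gaif_rel_copies (b b' : sdom copies) :
  gaif_rel b b' = ((val b).1 == (val b').1) && gaif_rel (val b).2 (val b').2.
Proof.
apply/idP/idP.
- case/andP=> b_neq /existsP[f /existsP[t]].
  case/andP=> /andP[/copies_fun_gt0P[X [u [_ uA tE]]] bt] b't.
  have in_copy c : c \in t -> (val c).1 = X /\ (val c).2 \in u.
    move=> ct; have : val c \in map val t by apply: map_f.
    by rewrite tE => /mapP[y /mem_redirect yu ->].
  have [bX bu] := in_copy _ bt; have [b'X b'u] := in_copy _ b't.
  rewrite bX b'X eqxx /=; apply/andP; split.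
    apply: contra b_neq => /eqP eq2; apply/eqP/val_inj.
    by rewrite [val b]surjective_pairing [val b']surjective_pairing bX b'X eq2.
  by apply/existsP; exists f; apply/existsP; exists u; rewrite uA bu b'u.
- case/andP=> /eqP eq1 /andP[neq2 /existsP[f /existsP[u /andP[/andP[uA bu] b'u]]]].
  have /andP[bX qX] := valP b.
  have [t tE] := copy_tuple_exists qX (avoids_redirect bu bX).
  have in_t c : (val c).1 = (val b).1 -> (val c).2 \in u -> c \in t.
    move=> c1 cu; rewrite -(mem_map val_inj) tE.
    have /andP[cX _] := valP c; rewrite c1 in cX.
    by rewrite [val c]surjective_pairing c1; apply: map_f; apply: redirect_keep.
  apply/andP; split; first by apply: contra neq2 => /eqP ->.
  apply/existsP; exists f; apply/existsP; exists t.
  rewrite in_t // in_t // !andbT.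
  by apply/copies_fun_gt0P; exists (val b).1, u.
Qed.

Lemma copies_class_iso (X : {set V}) : 0 < q X ->
  graph_iso (induced_subgraph (G := gaifman copies) [set b | (val b).1 == X])
            (induced_subgraph (G := gaifman A) (~: X)).
Proof.
move=> qX; set copyX := induced_subgraph _.
have copyX1 (z : gV copyX) : (val (val z)).1 = X.
  by apply/eqP; have := valP z; rewrite notin_setC inE.
apply: (@graph_iso_induced_subgraph copyX (gaifman A) _ (fun z => (val (val z)).2)).
- move=> z z' eq2; apply/val_inj/val_inj.
  by rewrite [val (val z)]surjective_pairing [val (val z')]surjective_pairing !copyX1 eq2.
- by move=> z; have /andP[] := valP (val z); rewrite copyX1 inE.
- move=> x; rewrite inE => xX.
  have xP : ((X, x).2 \notin (X, x).1) && (0 < q (X, x).1) by rewrite /= xX qX.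
  pose b : sdom copies := Sub (X, x) xP.
  have bP : b \notin ~: [set b : sdom copies | (val b).1 == X] by rewrite notin_setC inE.
  by exists (Sub b bP : gV copyX).
- by move=> z z'; rewrite /= /del_rel /= gaif_rel_copies !copyX1 eqxx.
Qed.

Lemma hom_weight_copies (C : structure s) (h : sdom copies -> sdom C) :
  hom_weight h = \sum_(f : ssym s) \sum_(u : (sar f).-tuple V) sfun u *
    \sum_X q X * redirect_weight X u *
      \sum_(t : (sar f).-tuple (sdom copies) | map val t == map (pair X) (redirect X u))
        sfun (map_tuple h t).
Proof.
apply: eq_bigr => f _.
under eq_bigr => t _ do rewrite /= /copies_fun mulr_suml.
under [RHS]eq_bigr => u _ do rewrite mulr_sumr.
rewrite exchange_big [RHS]exchange_big; apply: eq_bigr => X _ /=.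
under eq_bigr => t _ do rewrite -mulrA mulr_suml mulr_sumr.
rewrite (exchange_big_dep predT) //=; apply: eq_bigr => u _.
rewrite !mulr_sumr; apply: eq_bigr => t _; ring.
Qed.

Lemma redirect_weight_mul_le (C : structure s) (g : V -> sdom C) f (X : {set V})
    (u : (sar f).-tuple V) :
  sfun u * (redirect_weight X u * sfun (map_tuple g (redirect X u))) <=
  sfun u * sfun (map_tuple g u) + d * opt A C.
Proof.
have dopt_ge0 : 0 <= d * opt A C := mulr_ge0 (ltW d_gt0) (opt_ge0 A C).
rewrite /redirect_weight; case: ifP => [u_avoids|_].
  by rewrite mul1r redirect_id // lerDl.
rewrite mulrCA -[leLHS]add0r; apply: lerD; first exact: sfun_mul_ge0.
apply: ler_wpM2l; first exact: ltW.
have -> : map_tuple g (redirect X u) = map_tuple (g \o redirect_vertex X u) u.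
  by apply: val_inj; rewrite /= map_comp.
exact: sfun_mul_le_opt.
Qed.

Hypothesis q_sum1 : \sum_X q X = 1.

Lemma param_gaifman_copies_le (p : graph -> nat) (k : nat) :
  graph_parameter p -> (forall G H, p (disj_union G H) = maxn (p G) (p H)) ->
  (forall X, 0 < q X -> (p (del_graph (G := gaifman A) X) <= k)%N) ->
  (p (gaifman copies) <= k)%N.
Proof.
move=> p_iso p_union k_del.
have /(psumr_gt0P (fun X _ => q_ge0 X))[X0 qX0] : 0 < \sum_X q X by rewrite q_sum1.
have k_copy X : 0 < q X -> (p (induced_subgraph (G := gaifman A) (~: X)) <= k)%N.
  by move=> qX; rewrite /induced_subgraph finset.setCK; apply: k_del.
apply: (@param_le_of_classes p p_iso p_union (gaifman copies) _
  (fun b : sdom copies => (val b).1)).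
- by move=> b b'; rewrite /= gaif_rel_copies => /andP[/eqP].
- exact: leq_trans (param_set0_le p_iso p_union _ _) (k_copy X0 qX0).
- move=> b; have /andP[_ qX] := valP b.
  by rewrite (p_iso _ _ (copies_class_iso qX)); apply: k_copy.
Qed.

Lemma opt_copies_ge (C : structure s) (m : rat) (r : nat) :
  0 <= m -> (forall v, \sum_(X : {set V} | v \in X) q X <= m) ->
  (forall f : ssym s, sar f <= r)%N ->
  (1 - r%:R * m) * opt A C <= opt copies C.
Proof.
move=> m_ge0 q_marg ar_r.
have [rm_le0|rm_gt0] := lerP (1 - r%:R * m) 0.
  by apply: le_trans (opt_ge0 _ _); rewrite mulr_le0_ge0 ?opt_ge0.
rewrite mulrC -ler_pdivlMr //; apply: opt_le => [|h]; first by rewrite divr_ge0 ?opt_ge0 ?ltW.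
rewrite ler_pdivlMr //.
apply: le_trans (hom_weight_le_opt (fun b : sdom copies => h (val b).2)).
rewrite hom_weight_copies /hom_weight mulr_suml; apply: ler_sum => f _.
rewrite mulr_suml; apply: ler_sum => u _; rewrite -mulrA.
apply: ler_wpM2l; first exact: sfun_ge0.
apply: (@le_trans _ _ (sfun (map_tuple h u) * \sum_(X | avoids X u) q X)).
  apply: ler_wpM2l; first exact: sfun_ge0.
  apply: le_trans (sum_avoids_ge q_ge0 q_sum1 q_marg u).
  by rewrite lerD2l lerN2 size_tuple ler_wpM2r // ler_nat.
rewrite mulr_sumr big_mkcond; apply: ler_sum => X _.
case: ifP => [u_avoids|_]; last first.
  by rewrite !mulr_ge0 ?q_ge0 ?sumr_ge0 ?ltW ?redirect_weight_gt0 // => t _; apply: sfun_ge0.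
rewrite /redirect_weight u_avoids redirect_id // mulr1 mulrC.
have [->|qX_neq0] := eqVneq (q X) 0; first by rewrite !mul0r.
have qX : 0 < q X by rewrite lt0r qX_neq0 q_ge0.
have [t tE] := copy_tuple_exists qX u_avoids.
apply: ler_wpM2l; first exact: q_ge0.
apply: le_trans (sumr_ge_term _ _ (i := t)); [|by move=> t' _; apply: sfun_ge0|by rewrite tE].
suff -> : map_tuple (fun b : sdom copies => h (val b).2) t = map_tuple h u by [].
apply: val_inj => /=; have -> : (u : seq V) = map (fun c => (val c).2) t.
  by rewrite (map_comp snd val) tE -map_comp map_id.
by rewrite -map_comp.
Qed.

Hypothesis q_cover : forall v : V, exists X : {set V}, (v \notin X) && (0 < q X).

Definition default_copy (v : V) : copy_vertex :=
  Sub (xchoose (q_cover v), v) (xchooseP (q_cover v)).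

Definition to_copy (X : {set V}) (v : V) : copy_vertex := insubd (default_copy v) (X, v).

Lemma to_copy_val (b : copy_vertex) : to_copy (val b).1 (val b).2 = b.
Proof. by rewrite /to_copy -surjective_pairing valKd. Qed.

Lemma sum_copy_tuples_le (C : structure s) (h : sdom copies -> sdom C) f (X : {set V})
    (u : (sar f).-tuple V) :
  \sum_(t : (sar f).-tuple (sdom copies) | map val t == map (pair X) (redirect X u))
    sfun (map_tuple h t) <= sfun (map_tuple (h \o to_copy X) (redirect X u)).
Proof.
apply: sumr_le_uniq => [t t' /eqP tE /eqP t'E|t /eqP tE|]; last exact: sfun_ge0.
  by apply/val_inj/(inj_map val_inj); rewrite tE t'E.
suff -> : map_tuple h t = map_tuple (h \o to_copy X) (redirect X u) by [].
apply: val_inj => /=; have -> : (redirect X u : seq V) = map (fun c => (val c).2) t.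
  by rewrite (map_comp snd val) tE -map_comp map_id.
rewrite -map_comp; apply/eq_in_map => c ct.
have : val c \in map (pair X) (redirect X u) by rewrite -tE; apply: map_f.
case/mapP=> y _ cE; have c1 : (val c).1 = X by rewrite cE.
by rewrite /= -{1}(to_copy_val c); congr (h (to_copy _ _)).
Qed.

Lemma opt_copies_le (C : structure s) : opt copies C <= (1 + d * ntuples A) * opt A C.
Proof.
have optAC_ge0 := opt_ge0 A C.
apply: opt_le => [|h].
  exact: mulr_ge0 (addr_ge0 ler01 (mulr_ge0 (ltW d_gt0) (ntuples_ge0 A))) optAC_ge0.
pose g X := h \o to_copy X.
apply: (@le_trans _ _ (\sum_X q X * (hom_weight (g X) + d * opt A C * ntuples A))).
  have -> : \sum_X q X * (hom_weight (g X) + d * opt A C * ntuples A) =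
      \sum_f \sum_(u : (sar f).-tuple V)
        \sum_X q X * (sfun u * sfun (map_tuple (g X) u) + d * opt A C).
    symmetry; under eq_bigr => f _ do rewrite exchange_big /=.
    rewrite exchange_big /=; apply: eq_bigr => X _.
    under eq_bigr => f _ do rewrite -mulr_sumr.
    rewrite -mulr_sumr; congr (_ * _).
    rewrite /hom_weight /ntuples mulr_sumr -big_split /=.
    apply: eq_bigr => f _; rewrite mulr_sumr -big_split /=.
    by apply: eq_bigr => u _; rewrite mulr1.
  rewrite hom_weight_copies; apply: ler_sum => f _; apply: ler_sum => u _.
  rewrite mulr_sumr; apply: ler_sum => X _; rewrite mulrCA -!mulrA.
  apply: ler_wpM2l; first exact: q_ge0.
  rewrite mulrCA; apply: le_trans (redirect_weight_mul_le (g X) X u).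
  apply: ler_wpM2l; first exact: sfun_ge0.
  apply: ler_wpM2l; first exact: ltW (redirect_weight_gt0 _ _).
  exact: sum_copy_tuples_le.
rewrite -[leRHS]mul1r -{1}q_sum1 mulr_suml; apply: ler_sum => X _.
apply: ler_wpM2l; first exact: q_ge0.
rewrite mulrDl mul1r -mulrA [opt A C * _]mulrC mulrA lerD2r.
exact: hom_weight_le_opt.
Qed.

Lemma d_opt_copies_le (R : realType) (eps : R) (m : rat) (r : nat) :
  0 <= eps -> 0 <= m -> (forall v, \sum_(X : {set V} | v \in X) q X <= m) ->
  (forall f : ssym s, sar f <= r)%N ->
  r%:R * ratr m <= 1 - expR (- eps) -> ratr d * ratr (ntuples A) <= eps ->
  (d_opt R A copies <= eps%:E)%E.
Proof.
move=> eps_ge0 m_ge0 q_marg ar_r rm_small dN_small.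
apply: ge_ereal_sup => _ [C ->]; apply: ln_dist_le eps_ge0 (opt_ge0 A C) _ _.
  apply: le_trans (_ : ratr ((1 - r%:R * m) * opt A C) <= _); last first.
    by rewrite ler_rat (opt_copies_ge C m_ge0 q_marg ar_r).
  rewrite rmorphM; apply: ler_wpM2r; first by rewrite ler0q opt_ge0.
  by rewrite rmorphB rmorph1 rmorphM rmorph_nat; lra.
apply: (@le_trans _ _ (ratr ((1 + d * ntuples A) * opt A C))).
  by rewrite ler_rat opt_copies_le.
rewrite rmorphM; apply: ler_wpM2r; first by rewrite ler0q opt_ge0.
rewrite rmorphD rmorph1 rmorphM; apply: le_trans (expR_ge1Dx eps).
by rewrite lerD2l.
Qed.

End Copies.

Lemma rat_distribution_approx (R : realType) (T : finType) (pi : T -> R) :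
  (forall t, 0 <= pi t) -> \sum_t pi t = 1 ->
  exists q : {ffun T -> rat}, [/\ forall t, 0 <= q t, \sum_t q t = 1,
    forall t, 0 < q t -> 0 < pi t & forall t, ratr (q t) <= 2 * pi t].
Proof.
move=> pi_ge0 pi_sum1.
have approx t :
    exists x : rat, [/\ 0 <= x, 0 < x -> 0 < pi t & pi t / 2 <= ratr x <= pi t].
  have [pi0|pi_neq0] := eqVneq (pi t) 0.
    by exists 0; rewrite pi0 rmorph0 mul0r !lexx; split.
  have pi_gt0 : 0 < pi t by rewrite lt0r pi_neq0 pi_ge0.
  have half_lt : pi t / 2 < pi t by rewrite gtr_pMr ?invf_lt1 ?ltr1n.
  have [x] := rat_in_itvoo half_lt.
  rewrite in_itv /= => /andP[lo hi]; exists x; split => //; last by rewrite !ltW.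
  by rewrite -(ler_rat R) rmorph0; apply/ltW/lt_trans/lo; rewrite divr_gt0.
have [q0 q0P] := fin_all_exists approx.
have q0_ge0 t : 0 <= q0 t by have [] := q0P t.
set Q := \sum_t q0 t.
have Q_half : (\sum_t pi t) / 2 <= ratr Q.
  by rewrite mulr_suml rmorph_sum; apply: ler_sum => t _; have [_ _ /andP[]] := q0P t.
rewrite pi_sum1 in Q_half.
have Q_gt0 : 0 < Q.
  by rewrite -(ltr_rat R) rmorph0; apply: lt_le_trans Q_half; rewrite divr_gt0.
exists [ffun t => q0 t / Q]; split => [t|||t].
- by rewrite ffunE divr_ge0 // ltW.
- by under eq_bigr do rewrite ffunE; rewrite -mulr_suml divff // gt_eqF.
- by move=> t; rewrite ffunE pmulr_lgt0 ?invr_gt0 //; have [] := q0P t.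
- have [_ _ /andP[_ hi]] := q0P t; rewrite ffunE fmorph_div.
  have ratrQ_gt0 : 0 < ratr Q :> R by apply: lt_le_trans Q_half; rewrite divr_gt0.
  rewrite ler_pdivrMr //; apply: le_trans hi _.
  by have := pi_ge0 t; nra.
Qed.

Lemma exists_pos_rat_mul_le (R : realType) (x c : R) :
  0 < x -> 0 <= c -> exists d : rat, 0 < d /\ ratr d * c <= x.
Proof.
move=> x_gt0 c_ge0; have c1_gt0 : 0 < c + 1 by rewrite ltr_wpDl.
have [d] := rat_in_itvoo (divr_gt0 x_gt0 c1_gt0).
rewrite in_itv /= => /andP[d_gt0]; rewrite ltr_pdivlMr // => d_small.
by exists d; split; [rewrite -(ltr0q R) | nra].
Qed.

Lemma rat_set_distribution (R : realType) (T : finType) (pi : {set T} -> R) (m : rat) :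
  (forall X, 0 <= pi X) -> \sum_X pi X = 1 ->
  (forall v, \sum_(X : {set T} | v \in X) pi X <= ratr m / 2) ->
  exists q : {ffun {set T} -> rat}, [/\ forall X, 0 <= q X, \sum_X q X = 1,
    forall X, 0 < q X -> 0 < pi X & forall v, \sum_(X : {set T} | v \in X) q X <= m].
Proof.
move=> pi_ge0 pi_sum1 pi_marg.
have [q [q_ge0 q_sum1 q_supp q_le]] := rat_distribution_approx pi_ge0 pi_sum1.
exists q; split => // v; rewrite -(ler_rat R) rmorph_sum.
apply: (@le_trans _ _ (\sum_(X : {set T} | v \in X) 2 * pi X)).
  by apply: ler_sum => X _; apply: q_le.
by rewrite -mulr_sumr; move: (pi_marg v); lra.
Qed.

Theorem lemma19 (R : realType) (p : graph -> nat) (AA : struct_class) (r : nat) :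
  graph_parameter p ->
  (forall G H : graph, p (disj_union G H) = maxn (p G) (p H)) ->
  (forall s (A : structure s), AA s A -> forall f : ssym s, (sar f <= r)%N) ->
  frac_fragile R p (gaifman_class AA) ->
  pliable R p AA.
Proof.
move=> p_iso p_union arity frag eps eps_gt0.
have e1_gt0 : 0 < 1 - expR (- eps) by rewrite subr_gt0 expR_lt1 oppr_lt0.
have [m [m_gt0 m_small]] := exists_pos_rat_mul_le e1_gt0 (ler0n R r.+1).
have ratr_m_gt0 : 0 < ratr m :> R by rewrite ltr0q.
rewrite -natr1 in m_small.
have m_lt1 : m < 1.
  by rewrite -(ltr_rat R) rmorph1; have := ler0n R r; have := expR_gt0 (- eps); nra.
have [k k_frag] := frag (ratr m / 2) (divr_gt0 ratr_m_gt0 (ltr0Sn _ 1)).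
exists k => s A A_in.
have A_class : gaifman_class AA (gaifman A) by exists s, A.
have [pi [pi_ge0 pi_sum1 pi_k pi_marg]] := k_frag _ A_class.
have [q [q_ge0 q_sum1 q_supp q_marg]] := rat_set_distribution pi_ge0 pi_sum1 pi_marg.
have N_ge0 : 0 <= ratr (ntuples A) :> R by rewrite ler0q ntuples_ge0.
have [d [d_gt0 d_small]] := exists_pos_rat_mul_le eps_gt0 N_ge0.
exists (copies q_ge0 d_gt0); split.
  by apply: param_gaifman_copies_le => // X /q_supp; apply: pi_k.
have q_cover v := exists_avoiding_set q_ge0 q_sum1 q_marg v m_lt1.
apply: (@d_opt_copies_le s A q d q_ge0 d_gt0 q_sum1 q_cover R eps m r) => //.
- exact: ltW.
- exact: ltW.
- exact: arity _ _ A_in.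
- by have := ler0n R r; nra.
Qed.
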